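(* In the Simon urn described in the context, with fixed trigger probability $p\in(0,1)$, for all $n\ge1$, $$\mathbb E[K_{n,1}]=\frac{\Gamma(n+1-p)}{\Gamma(2-p)\,\Gamma(n)},$$ and, as $n\to\infty$, $$\mathbb E[K_{n,1}]=\frac{n^{1-p}}{\Gamma(2-p)}+O\!\left(\frac{1}{n^{p}}\right).$$
   Context: Simon urn. The urn is empty at time $0$. Let $B_0=1$ and let $(B_n)_{n\ge1}$ be i.i.d. Bernoulli random variables with $\Pr(B_n=1)=p\in(0,1)$, independent of everything else. Colors are labelled $1,2,\dots$ in order of first appearance. At each time $n\ge1$: if $B_{n-1}=1$, one ball of a new color is added and registered; if $B_{n-1}=0$, a ball is drawn uniformly at random from the urn, its color is registered, and one additional ball of that color is added. $K_{n,c}$ denotes the number of times color $c$ has been registered up to and including time $n$ (equal to the number of balls of color $c$ at time $n$). $\Gamma$ is the gamma function. *)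

From Stdlib Require Import Reals List.
From Coquelicot Require Import Coquelicot.
Open Scope R_scope.

Definition Gamma (x : R) : R :=
  RInt_gen (fun t => Rpower t (x - 1) * exp (- t)) (at_right 0) (Rbar_locally p_infty).

Fixpoint incr (s : list nat) (c : nat) : list nat :=
  match s, c with
  | nil, _ => nil
  | x :: s', O => S x :: s'
  | x :: s', S c' => x :: incr s' c'
  end.

(* State of the urn at time n: list of counts, index c-1 = number of balls of color c
   (= K_{n,c}).  Transition from time n to time n+1 given state s (which has n balls):
   - at n = 0, B_0 = 1: a ball of a new color is added;
   - at n >= 1, B_n ~ Bernoulli(p) is independent of the past: with probability p a new
     color is added; with probability 1-p a ball is drawn uniformly among the n balls,
     color c+1 being drawn with probability s_c / n, and its count is incremented. *)
Definition step (p : R) (n : nat) (s : list nat) : list (R * list nat) :=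
  match n with
  | O => (1, s ++ (1%nat :: nil)) :: nil
  | S _ =>
      (p, s ++ (1%nat :: nil)) ::
      map (fun c => ((1 - p) * INR (nth c s O) / INR n, incr s c)) (seq 0 (length s))
  end.

Fixpoint dist (p : R) (n : nat) : list (R * list nat) :=
  match n with
  | O => (1, nil) :: nil
  | S m => flat_map (fun ws => map (fun ws' => (fst ws * fst ws', snd ws'))
                                  (step p m (snd ws))) (dist p m)
  end.

Definition EK1 (p : R) (n : nat) : R :=
  fold_right Rplus 0 (map (fun ws => fst ws * INR (nth 0 (snd ws) O)) (dist p n)).

(* Every colour already present gains in expectation a factor 1 + (1-p)/n at step n:
   with probability p a new colour arrives, otherwise colour c is drawn with probability
   K_{n,c}/n and gains a ball.  Hence E[K_{n,1}] = prod_{1 <= m < n} (m + 1 - p)/m, which is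
   Gamma(n+1-p) / (Gamma(2-p) Gamma(n)) by Gamma(x+1) = x Gamma(x).
   For the asymptotics we use Wendel's inequality Gamma(x+s) <= x^s Gamma(x) (0 <= s <= 1),
   obtained by integrating the concavity bound (t/x)^s <= 1 - s + s t/x against
   t^(x-1) e^(-t).  Applied with s = 1-p at x and with s = p at x+1-p it gives
   x (x+1-p)^(-p) <= Gamma(x+1-p)/Gamma(x) <= x^(1-p), and these bounds differ by at most x^(-p). *)

From Pilot Require Import Defs.
From Stdlib Require Import Reals List Lia Lra Classical.
From Coquelicot Require Import Coquelicot.
Open Scope R_scope.

(** * Expected counts in the Simon urn *)

Definition rsum : list R -> R := fold_right Rplus 0.

Lemma rsum_app (l1 l2 : list R) : rsum (l1 ++ l2) = rsum l1 + rsum l2.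
Proof. induction l1 as [|x l1 IH]; simpl; [ring|]. unfold rsum in *; simpl; rewrite IH; ring. Qed.

Lemma rsum_map_plus {A : Type} (f g : A -> R) (l : list A) :
  rsum (map (fun a => f a + g a) l) = rsum (map f l) + rsum (map g l).
Proof. induction l as [|a l IH]; unfold rsum in *; simpl; [ring|]. rewrite IH; ring. Qed.

Lemma rsum_map_scal {A : Type} (c : R) (f : A -> R) (l : list A) :
  rsum (map (fun a => c * f a) l) = c * rsum (map f l).
Proof. induction l as [|a l IH]; unfold rsum in *; simpl; [ring|]. rewrite IH; ring. Qed.

Lemma rsum_seq_nth (s : list nat) :
  rsum (map (fun d => INR (nth d s O)) (seq 0 (length s))) = INR (list_sum s).
Proof.
  induction s as [|x s IH]; [reflexivity|].
  cbn [length seq map nth]. rewrite <- seq_shift, map_map. cbn [nth].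
  unfold rsum in *; simpl. rewrite IH, plus_INR. reflexivity.
Qed.

Lemma rsum_seq_indicator (f : nat -> R) (c k : nat) :
  rsum (map (fun d => if Nat.eqb c d then f d else 0) (seq 0 k))
  = if Nat.ltb c k then f c else 0.
Proof.
  induction k as [|k IH]; [reflexivity|].
  rewrite seq_S, map_app, rsum_app, IH. simpl.
  destruct (Nat.ltb_spec c k), (Nat.eqb_spec c k), (Nat.ltb_spec c (S k));
    subst; try lia; ring.
Qed.

Definition mean (f : list nat -> R) (d : list (R * list nat)) : R :=
  rsum (map (fun ws => fst ws * f (snd ws)) d).

Definition count (c : nat) (s : list nat) : R := INR (nth c s O).

Lemma mean_scal (k : R) (f : list nat -> R) (d : list (R * list nat)) :
  mean (fun s => k * f s) d = k * mean f d.
Proof.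
  unfold mean. rewrite <- rsum_map_scal. f_equal. apply map_ext. intros; ring.
Qed.

Lemma mean_ext_in (f g : list nat -> R) (d : list (R * list nat)) :
  (forall ws, In ws d -> f (snd ws) = g (snd ws)) -> mean f d = mean g d.
Proof.
  intros Hfg. unfold mean. f_equal. apply map_ext_in. intros ws Hws. rewrite Hfg; auto.
Qed.

Lemma mean_dist_S (p : R) (m : nat) (f : list nat -> R) :
  mean f (Defs.dist p (S m)) = mean (fun s => mean f (step p m s)) (Defs.dist p m).
Proof.
  unfold mean; simpl Defs.dist. induction (Defs.dist p m) as [|ws d IH]; [reflexivity|].
  simpl. rewrite map_app, rsum_app, IH, map_map. simpl.
  rewrite <- rsum_map_scal. unfold rsum at 3. simpl. f_equal. f_equal.
  apply map_ext. intros; ring.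
Qed.

Lemma list_sum_incr (s : list nat) (d : nat) :
  (d < length s)%nat -> list_sum (incr s d) = S (list_sum s).
Proof.
  revert d; induction s as [|x s IH]; intros [|d] Hd; simpl in *; try lia.
  rewrite IH by lia. lia.
Qed.

Lemma nth_incr (s : list nat) (c d : nat) : (d < length s)%nat ->
  nth c (incr s d) O = (nth c s O + if Nat.eqb c d then 1 else 0)%nat.
Proof.
  revert c d; induction s as [|x s IH]; intros [|c] [|d] Hd; simpl in *; try lia.
  apply IH. lia.
Qed.

Lemma step_list_sum (p : R) (m : nat) (s : list nat) (ws : R * list nat) :
  list_sum s = m -> In ws (step p m s) -> list_sum (snd ws) = S m.
Proof.
  intros Hs Hws. destruct m as [|m]; simpl in Hws.
  - destruct Hws as [<-|[]]. simpl. rewrite list_sum_app. simpl. lia.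
  - destruct Hws as [<-|Hws].
    + simpl. rewrite list_sum_app. simpl. lia.
    + apply in_map_iff in Hws as [d [<- Hd]]. apply in_seq in Hd.
      simpl. rewrite list_sum_incr; lia.
Qed.

Lemma dist_list_sum (p : R) (m : nat) (ws : R * list nat) :
  In ws (Defs.dist p m) -> list_sum (snd ws) = m.
Proof.
  revert ws; induction m as [|m IH]; intros ws Hws; simpl in Hws.
  - destruct Hws as [<-|[]]. reflexivity.
  - apply in_flat_map in Hws as [ws0 [H0 H1]].
    apply in_map_iff in H1 as [ws1 [<- H1]]. simpl.
    apply (step_list_sum p m (snd ws0)); auto.
Qed.

Lemma mean_step_count (p : R) (m c : nat) (s : list nat) :
  (1 <= m)%nat -> list_sum s = m -> (c < length s)%nat ->
  mean (count c) (step p m s) = (1 + (1 - p) / INR m) * count c s.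
Proof.
  intros Hm Hs Hc. destruct m as [|m]; [lia|].
  unfold mean, count. cbn [step map fst snd]. rewrite map_map. cbn [fst snd].
  rewrite app_nth1 by exact Hc.
  set (w := (1 - p) / INR (S m)).
  rewrite (map_ext_in _ (fun d => w * INR (nth c s O) * INR (nth d s O)
                                + (if Nat.eqb c d then w * INR (nth d s O) else 0))).
  2:{ intros d Hd. apply in_seq in Hd. rewrite nth_incr, plus_INR by lia. unfold w.
      destruct (Nat.eqb c d); [change (INR 1) with 1 | change (INR 0) with 0]; unfold Rdiv; ring. }
  unfold rsum at 1. cbn [fold_right]. fold rsum.
  rewrite rsum_map_plus, rsum_map_scal, rsum_seq_nth, rsum_seq_indicator, Hs.
  rewrite (proj2 (Nat.ltb_lt _ _) Hc). unfold w.
  field. apply not_0_INR. lia.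
Qed.

Lemma EK1_S (p : R) (m : nat) : (1 <= m)%nat ->
  EK1 p (S m) = (1 + (1 - p) / INR m) * EK1 p m.
Proof.
  intros Hm. change (EK1 p ?n) with (mean (count 0) (Defs.dist p n)).
  rewrite mean_dist_S, <- mean_scal. apply mean_ext_in. intros ws Hws.
  pose proof (dist_list_sum p m ws Hws) as Hsum.
  apply mean_step_count; [assumption..|].
  destruct (snd ws); simpl in *; lia.
Qed.

Lemma EK1_1 (p : R) : EK1 p 1 = 1.
Proof. unfold EK1. simpl. ring. Qed.

(** * Real-analysis preliminaries *)

Lemma exp_le_compat (a b : R) : a <= b -> exp a <= exp b.
Proof. intros [H|H]; [left; apply exp_increasing, H | subst; right; reflexivity]. Qed.

Lemma Rpower_pos (x y : R) : 0 < Rpower x y.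
Proof. apply exp_pos. Qed.

Lemma Rpower_1_l (y : R) : Rpower 1 y = 1.
Proof. unfold Rpower. rewrite ln_1, Rmult_0_r. apply exp_0. Qed.

Lemma ln_le_sub_1 (y : R) : 0 < y -> ln y <= y - 1.
Proof. intros Hy. pose proof (exp_ineq1_le (ln y)) as H. rewrite exp_ln in H; lra. Qed.

Lemma Rpower_le_affine (y s : R) : 0 < y -> 0 <= s <= 1 -> Rpower y s <= 1 - s + s * y.
Proof.
  intros Hy Hs. set (z := Rpower y s).
  assert (Hz : 0 < z) by apply Rpower_pos.
  assert (Hzm : z * exp (- (s * ln y)) = 1).
  { unfold z, Rpower. rewrite <- exp_plus, Rplus_opp_r. apply exp_0. }
  assert (Hzy : z * exp ((1 - s) * ln y) = y).
  { unfold z, Rpower. rewrite <- exp_plus. replace (s * ln y + (1 - s) * ln y) with (ln y) by ring.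
    apply exp_ln, Hy. }
  (* tangent lines of [exp] at [s * ln y], evaluated at [0] and at [ln y] *)
  pose proof (exp_ineq1_le (- (s * ln y))) as H0.
  pose proof (exp_ineq1_le ((1 - s) * ln y)) as H1.
  apply (Rmult_le_compat_l z) in H0, H1; try lra.
  nra.
Qed.

Lemma exp_neg_le_Rpower (c t : R) : 1 <= c -> 0 <= t ->
  exp (- t) <= Rpower c c / Rpower (1 + t) c.
Proof.
  intros Hc Ht. unfold Rpower, Rdiv. rewrite <- exp_Ropp, <- exp_plus.
  apply exp_le_compat.
  assert (Hln : c * (ln (1 + t) - ln c) <= c * ((1 + t) / c - 1)).
  { apply Rmult_le_compat_l; [lra|]. rewrite <- ln_div by lra.
    apply ln_le_sub_1, Rdiv_lt_0_compat; lra. }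
  replace (c * ((1 + t) / c - 1)) with (1 + t - c) in Hln by (field; lra).
  lra.
Qed.

Lemma is_derive_Rpower (y t : R) : 0 < t ->
  is_derive (fun u => Rpower u y) t (y * Rpower t (y - 1)).
Proof. intros Ht. apply is_derive_Reals, derivable_pt_lim_power, Ht. Qed.

Lemma ball_R (x e y : R) : ball x e y <-> Rabs (y - x) < e.
Proof. reflexivity. Qed.

Lemma at_right_0_lt (c : R) : 0 < c -> at_right 0 (fun a => 0 < a < c).
Proof.
  intros Hc. exists (mkposreal c Hc). intros y Hy Hy0. rewrite ball_R in Hy. simpl in Hy.
  rewrite Rminus_0_r, Rabs_pos_eq in Hy; lra.
Qed.

Lemma is_lim_Rpower_at_right_0 (x : R) : 0 < x ->
  filterlim (fun t => Rpower t x) (at_right 0) (locally 0).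
Proof.
  intros Hx. apply filterlim_locally. intros eps.
  apply (filter_imp (fun t => 0 < t < Rpower eps (/ x))); [|apply at_right_0_lt, Rpower_pos].
  intros t Ht. rewrite ball_R, Rminus_0_r, Rabs_pos_eq by (left; apply Rpower_pos).
  replace (pos eps) with (Rpower (Rpower eps (/ x)) x).
  - apply Rlt_Rpower_l; lra.
  - rewrite Rpower_mult, Rinv_l, Rpower_1 by (try apply cond_pos; lra). reflexivity.
Qed.

Lemma is_lim_div_1_plus_p_infty (C : R) :
  filterlim (fun t => C / (1 + t)) (Rbar_locally p_infty) (locally 0).
Proof.
  replace 0 with (C * 0) by ring.
  apply (is_lim_scal_l (fun t => / (1 + t)) C p_infty 0).
  apply (is_lim_inv (fun t => 1 + t) p_infty p_infty); [|discriminate].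
  eapply is_lim_plus; [apply is_lim_const | apply is_lim_id | constructor].
Qed.

Lemma is_lim_Rpower_mul_exp_at_right_0 (x : R) : 0 < x ->
  filterlim (fun t => Rpower t x * exp (- t)) (at_right 0) (locally 0).
Proof.
  intros Hx. apply (filterlim_le_le (fun _ => 0) _ (fun t => Rpower t x) 0).
  - exists (mkposreal 1 Rlt_0_1). intros t _ Ht. split.
    + left. apply Rmult_lt_0_compat; [apply Rpower_pos | apply exp_pos].
    + rewrite <- (Rmult_1_r (Rpower t x)) at 2.
      apply Rmult_le_compat_l; [left; apply Rpower_pos|].
      rewrite <- exp_0. apply exp_le_compat. lra.
  - apply filterlim_const.
  - apply is_lim_Rpower_at_right_0, Hx.
Qed.

Lemma is_lim_Rpower_mul_exp_p_infty (x : R) : 0 < x ->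
  filterlim (fun t => Rpower t x * exp (- t)) (Rbar_locally p_infty) (locally 0).
Proof.
  intros Hx. set (K := Rpower (x + 1) (x + 1)).
  apply (filterlim_le_le (fun _ => 0) _ (fun t => K / (1 + t)) 0).
  - exists 0. intros t Ht. split.
    + left. apply Rmult_lt_0_compat; [apply Rpower_pos | apply exp_pos].
    + apply Rle_trans with (Rpower t x * (K / Rpower (1 + t) (x + 1))).
      { apply Rmult_le_compat_l; [left; apply Rpower_pos | apply exp_neg_le_Rpower; lra]. }
      assert (HK : 0 < K) by apply Rpower_pos.
      assert (Ht1 : 0 < Rpower (1 + t) x) by apply Rpower_pos.
      rewrite Rpower_plus, Rpower_1 by lra.
      replace (Rpower t x * (K / (Rpower (1 + t) x * (1 + t))))
        with (K / (1 + t) * (Rpower t x / Rpower (1 + t) x)) by (field; lra).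
      rewrite <- (Rmult_1_r (K / (1 + t))) at 2.
      apply Rmult_le_compat_l; [apply Rlt_le, Rdiv_lt_0_compat; lra|].
      apply (Rdiv_le_1 _ _ Ht1), Rle_Rpower_l; lra.
  - apply filterlim_const.
  - apply is_lim_div_1_plus_p_infty.
Qed.

(** * Improper integrals over (0, +oo) *)

Lemma is_lub_approx (E : R -> Prop) (L eps : R) : is_lub E L -> 0 < eps ->
  exists y, E y /\ L - eps < y.
Proof.
  intros [_ HL] Heps. apply NNPP. intros Hno.
  assert (L <= L - eps); [|lra].
  apply HL. intros y Hy. apply Rnot_lt_le. intros Hlt. apply Hno. now exists y.
Qed.

Lemma RInt_le_RInt_widen (f : R -> R) (a a' b' b : R) :
  (forall t, 0 < t -> continuous f t) -> (forall t, 0 < t -> 0 <= f t) ->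
  0 < a <= a' -> a' <= b' <= b -> RInt f a' b' <= RInt f a b.
Proof.
  intros Hc Hp Ha Hb.
  assert (Hex : forall u v, 0 < u <= v -> ex_RInt f u v).
  { intros u v Huv. apply (@ex_RInt_continuous R_CompleteNormedModule).
    intros t Ht. apply Hc. rewrite Rmin_left in Ht; lra. }
  assert (Hpos : forall u v, 0 < u <= v -> 0 <= RInt f u v).
  { intros u v Huv. apply RInt_ge_0; [lra | apply Hex, Huv |]. intros t Ht. apply Hp. lra. }
  rewrite <- (RInt_Chasles f a a' b), <- (RInt_Chasles f a' b' b) by (apply Hex; lra).
  pose proof (Hpos a a' ltac:(lra)). pose proof (Hpos b' b ltac:(lra)). unfold plus; simpl. lra.
Qed.

Lemma is_RInt_gen_0_infty_of_bounded (f : R -> R) (M : R) :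
  (forall t, 0 < t -> continuous f t) -> (forall t, 0 < t -> 0 <= f t) ->
  (forall a b, 0 < a <= b -> RInt f a b <= M) ->
  exists L, is_RInt_gen f (at_right 0) (Rbar_locally p_infty) L /\
            (forall a b, 0 < a <= b -> RInt f a b <= L).
Proof.
  intros Hc Hp HM.
  set (E := fun y => exists a b, 0 < a <= b /\ y = RInt f a b).
  assert (HB : bound E) by (exists M; intros y [a [b [Hab ->]]]; apply HM, Hab).
  assert (HE : exists y, E y) by (exists (RInt f 1 1), 1, 1; split; [lra | reflexivity]).
  destruct (completeness E HB HE) as [L HL].
  assert (Hup : forall a b, 0 < a <= b -> RInt f a b <= L).
  { intros a b Hab. apply HL. now exists a, b. }
  exists L. split; [|exact Hup].
  apply filterlimi_locally. intros eps.
  destruct (is_lub_approx E L eps HL (cond_pos eps)) as [y [[a0 [b0 [Hab0 ->]]] Hy]].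
  apply (Filter_prod _ _ _ (fun a => 0 < a < a0) (fun b => b0 < b)).
  - apply at_right_0_lt. lra.
  - now exists b0.
  - intros a b Ha Hb. exists (RInt f a b). split.
    + apply (@RInt_correct R_CompleteNormedModule), (@ex_RInt_continuous R_CompleteNormedModule).
      intros t Ht. apply Hc. rewrite Rmin_left in Ht; simpl; lra.
    + rewrite ball_R. apply Rabs_lt_between. simpl.
      pose proof (Hup a b ltac:(simpl; lra)).
      pose proof (RInt_le_RInt_widen f a a0 b0 b Hc Hp ltac:(lra) ltac:(simpl; lra)).
      simpl in *. lra.
Qed.

Lemma is_RInt_gen_0_infty_le (f g : R -> R) (lf lg : R) :
  (forall t, 0 < t -> 0 <= f t <= g t) ->
  is_RInt_gen f (at_right 0) (Rbar_locally p_infty) lf ->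
  is_RInt_gen g (at_right 0) (Rbar_locally p_infty) lg -> lf <= lg.
Proof.
  intros Hfg Hf Hg. apply Rle_trans with (Rabs lf); [apply Rle_abs|].
  apply (@RInt_gen_norm R_CompleteNormedModule (at_right 0) (Rbar_locally p_infty) _ _ f g lf lg);
    [| | exact Hf | exact Hg].
  - apply (Filter_prod _ _ _ (fun a => 0 < a < 1) (fun b => 1 < b)).
    + apply at_right_0_lt. lra.
    + now exists 1.
    + simpl. intros. lra.
  - apply (Filter_prod _ _ _ (fun a => 0 < a < 1) (fun b => True)).
    + apply at_right_0_lt. lra.
    + now exists 0.
    + simpl. intros a b Ha _ t Ht. specialize (Hfg t ltac:(lra)).
      change (Rabs (f t) <= g t). rewrite Rabs_pos_eq; lra.
Qed.

Lemma is_RInt_gen_0_infty_primitive (f F : R -> R) (la lb : R) :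
  (forall t, 0 < t -> is_derive F t (f t)) -> (forall t, 0 < t -> continuous f t) ->
  filterlim F (at_right 0) (locally la) ->
  filterlim F (Rbar_locally p_infty) (locally lb) ->
  is_RInt_gen f (at_right 0) (Rbar_locally p_infty) (lb - la).
Proof.
  intros Hd Hc Ha Hb. apply filterlimi_locally. intros eps.
  assert (He : 0 < eps / 2) by (destruct eps; simpl; lra).
  apply filterlim_locally with (eps := mkposreal _ He) in Ha.
  apply filterlim_locally with (eps := mkposreal _ He) in Hb.
  apply (Filter_prod _ _ _ (fun a => 0 < a /\ ball la (eps / 2) (F a))
                          (fun b => 0 < b /\ ball lb (eps / 2) (F b))).
  - apply filter_and; [now exists (mkposreal 1 Rlt_0_1) | exact Ha].
  - apply filter_and; [now exists 0 | exact Hb].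
  - intros a b [Ha0 Ha1] [Hb0 Hb1]. exists (F b - F a). split.
    + apply (@is_RInt_derive R_CompleteNormedModule);
        intros t Ht; [apply Hd | apply Hc]; apply Rlt_le_trans with (Rmin a b);
        try apply Rmin_glb_lt; simpl in *; lra.
    + rewrite ball_R in *. simpl in *.
      replace (F b - F a - (lb - la)) with ((F b - lb) - (F a - la)) by ring.
      eapply Rle_lt_trans; [apply Rabs_triang|]. rewrite Rabs_Ropp. lra.
Qed.

(** * The Gamma function *)

Definition gamma_integrand (x t : R) : R := Rpower t (x - 1) * exp (- t).

Lemma gamma_integrand_pos (x t : R) : 0 < gamma_integrand x t.
Proof. apply Rmult_lt_0_compat; apply exp_pos. Qed.

Lemma gamma_integrand_continuous (x t : R) : 0 < t -> continuous (gamma_integrand x) t.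
Proof.
  intros Ht. apply (@ex_derive_continuous R_AbsRing R_NormedModule), ex_derive_mult.
  - eexists. apply is_derive_Rpower, Ht.
  - auto_derive. exact I.
Qed.

Lemma gamma_integrand_le (x t : R) : 0 < x -> 0 < t ->
  gamma_integrand x t <= Rpower (x + 1) (x + 1) * (Rpower t (x - 1) / Rpower (1 + t) (x + 1)).
Proof.
  intros Hx Ht. unfold gamma_integrand.
  replace (Rpower (x + 1) (x + 1) * (Rpower t (x - 1) / Rpower (1 + t) (x + 1)))
    with (Rpower t (x - 1) * (Rpower (x + 1) (x + 1) / Rpower (1 + t) (x + 1)))
    by (field; apply Rgt_not_eq, Rpower_pos).
  apply Rmult_le_compat_l; [left; apply Rpower_pos|].
  apply exp_neg_le_Rpower; lra.
Qed.

Lemma is_derive_Rpower_ratio (x t : R) : 0 < x -> 0 < t ->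
  is_derive (fun u => Rpower (u / (1 + u)) x / x) t (Rpower t (x - 1) / Rpower (1 + t) (x + 1)).
Proof.
  intros Hx Ht. unfold Rpower. auto_derive.
  - repeat split; [lra|]. apply Rdiv_lt_0_compat; lra.
  - change (t * / (1 + t)) with (t / (1 + t)). rewrite ln_div by lra.
    unfold Rdiv. rewrite <- !exp_Ropp, <- exp_plus.
    replace ((x - 1) * ln t + - ((x + 1) * ln (1 + t)))
      with (x * (ln t - ln (1 + t)) + - ln t + - ln (1 + t)) by ring.
    rewrite !exp_plus, !exp_Ropp, !exp_ln by lra. field. lra.
Qed.

Lemma RInt_gamma_integrand_le (x a b : R) : 0 < x -> 0 < a <= b ->
  RInt (gamma_integrand x) a b <= Rpower (x + 1) (x + 1) / x.
Proof.
  intros Hx Hab.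
  set (K := Rpower (x + 1) (x + 1)).
  (* [G] is a bounded primitive of the majorant of [gamma_integrand_le]. *)
  set (G := fun u => K * (Rpower (u / (1 + u)) x / x)).
  set (g := fun u => K * (Rpower u (x - 1) / Rpower (1 + u) (x + 1))).
  assert (Hin : forall u, Rmin a b <= u <= Rmax a b -> 0 < u).
  { intros u Hu. rewrite Rmin_left in Hu; lra. }
  assert (HG' : forall u, 0 < u -> is_derive G u (g u)).
  { intros u Hu. exact (is_derive_scal _ u K _ (is_derive_Rpower_ratio x u Hx Hu)). }
  assert (HG : is_RInt g a b (G b - G a)).
  { apply (@is_RInt_derive R_CompleteNormedModule).
    - intros u Hu. apply HG', Hin, Hu.
    - intros u Hu. specialize (Hin u Hu).
      apply (@ex_derive_continuous R_AbsRing R_NormedModule).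
      unfold g, Rpower. auto_derive. repeat split; try lra. apply Rgt_not_eq, exp_pos. }
  apply Rle_trans with (G b - G a).
  - rewrite <- (is_RInt_unique _ _ _ _ HG).
    apply RInt_le; [lra | | exists (G b - G a); exact HG |].
    + apply (@ex_RInt_continuous R_CompleteNormedModule).
      intros u Hu. apply gamma_integrand_continuous, Hin, Hu.
    + intros u Hu. apply gamma_integrand_le; lra.
  - assert (HKx : 0 < K / x) by (apply Rdiv_lt_0_compat; [apply Rpower_pos | exact Hx]).
    assert (Hb : Rpower (b / (1 + b)) x <= 1).
    { rewrite <- (Rpower_1_l x) at 2. apply Rle_Rpower_l; [lra|].
      split; [apply Rdiv_lt_0_compat; lra | apply (Rdiv_le_1 b (1 + b)); lra]. }
    pose proof (Rpower_pos (a / (1 + a)) x).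
    unfold G. replace (K * (Rpower (b / (1 + b)) x / x)) with (K / x * Rpower (b / (1 + b)) x)
      by (field; lra).
    replace (K * (Rpower (a / (1 + a)) x / x)) with (K / x * Rpower (a / (1 + a)) x)
      by (field; lra).
    nra.
Qed.

Lemma Gamma_spec (x : R) : 0 < x ->
  is_RInt_gen (gamma_integrand x) (at_right 0) (Rbar_locally p_infty) (Gamma x) /\
  (forall a b, 0 < a <= b -> RInt (gamma_integrand x) a b <= Gamma x).
Proof.
  intros Hx.
  destruct (is_RInt_gen_0_infty_of_bounded (gamma_integrand x) (Rpower (x + 1) (x + 1) / x))
    as [L [HL Hup]].
  - apply gamma_integrand_continuous.
  - intros t _. left. apply gamma_integrand_pos.
  - intros a b. apply RInt_gamma_integrand_le, Hx.
  - replace (Gamma x) with L by (symmetry; exact (is_RInt_gen_unique _ _ HL)). auto.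
Qed.

Lemma Gamma_pos (x : R) : 0 < x -> 0 < Gamma x.
Proof.
  intros Hx. apply Rlt_le_trans with (RInt (gamma_integrand x) 1 2).
  - apply RInt_gt_0; [lra | intros; apply gamma_integrand_pos |].
    intros t Ht. apply gamma_integrand_continuous. lra.
  - apply (proj2 (Gamma_spec x Hx)). lra.
Qed.

Lemma Gamma_succ (x : R) : 0 < x -> Gamma (x + 1) = x * Gamma x.
Proof.
  intros Hx.
  set (dh := fun t => x * gamma_integrand x t - gamma_integrand (x + 1) t).
  assert (Hd : forall t, 0 < t -> is_derive (fun u => Rpower u x * exp (- u)) t (dh t)).
  { intros t Ht.
    replace (dh t) with (x * Rpower t (x - 1) * exp (- t) + Rpower t x * (- exp (- t)))
      by (unfold dh, gamma_integrand; replace (x + 1 - 1) with x by ring; ring).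
    apply (is_derive_mult (fun u => Rpower u x) (fun u => exp (- u)));
      [apply is_derive_Rpower, Ht | auto_derive; [exact I | ring] | intros; apply Rmult_comm]. }
  assert (Hc : forall t, 0 < t -> continuous dh t).
  { intros t Ht. apply (continuous_minus (fun u => x * gamma_integrand x u)).
    - apply (continuous_scal_r x (gamma_integrand x)), gamma_integrand_continuous, Ht.
    - apply gamma_integrand_continuous, Ht. }
  pose proof (is_RInt_gen_0_infty_primitive dh _ 0 0 Hd Hc
    (is_lim_Rpower_mul_exp_at_right_0 x Hx) (is_lim_Rpower_mul_exp_p_infty x Hx)) as G0.
  destruct (Gamma_spec x Hx) as [Gx _].
  destruct (Gamma_spec (x + 1) ltac:(lra)) as [Gx1 _].
  assert (G1 : is_RInt_gen dh (at_right 0) (Rbar_locally p_infty) (x * Gamma x - Gamma (x + 1)))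
    by exact (is_RInt_gen_minus _ _ _ _ (is_RInt_gen_scal _ x _ Gx) Gx1).
  apply (@is_RInt_gen_unique R_CompleteNormedModule (at_right 0) (Rbar_locally p_infty) _ _)
    in G0, G1.
  lra.
Qed.

Lemma Gamma_1 : Gamma 1 = 1.
Proof.
  set (h := fun t => - exp (- t)).
  assert (Hd : forall t, 0 < t -> is_derive h t (gamma_integrand 1 t)).
  { intros t Ht. unfold gamma_integrand. rewrite Rminus_diag, Rpower_O by exact Ht.
    unfold h. auto_derive; [exact I | ring]. }
  assert (H0 : filterlim h (at_right 0) (locally (-1))).
  { replace (-1) with (h 0) by (unfold h; rewrite Ropp_0, exp_0; reflexivity).
    apply (filterlim_filter_le_1 _ (@filter_le_within R (locally 0) _ (fun u => 0 < u))).
    apply (@ex_derive_continuous R_AbsRing R_NormedModule). unfold h. auto_derive. exact I. }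
  assert (Hinf : filterlim h (Rbar_locally p_infty) (locally 0)).
  { apply (filterlim_le_le (fun t => -1 / (1 + t)) h (fun _ => 0) 0).
    - exists 0. intros t Ht. unfold h.
      assert (exp (- t) <= / (1 + t)).
      { rewrite exp_Ropp. apply Rinv_le_contravar; [lra | apply exp_ineq1_le]. }
      pose proof (exp_pos (- t)).
      replace (-1 / (1 + t)) with (- / (1 + t)) by (field; lra). lra.
    - apply is_lim_div_1_plus_p_infty.
    - apply filterlim_const. }
  pose proof (is_RInt_gen_0_infty_primitive _ h (-1) 0 Hd
                (fun t Ht => gamma_integrand_continuous 1 t Ht) H0 Hinf) as G.
  apply (@is_RInt_gen_unique R_CompleteNormedModule (at_right 0) (Rbar_locally p_infty) _ _) in G.
  change (Gamma 1) with (RInt_gen (gamma_integrand 1) (at_right 0) (Rbar_locally p_infty)).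
  rewrite G. ring.
Qed.

Lemma Gamma_add_le (x s : R) : 0 < x -> 0 <= s <= 1 ->
  Gamma (x + s) <= Rpower x s * Gamma x.
Proof.
  intros Hx Hs.
  destruct (Gamma_spec x Hx) as [Gx _].
  destruct (Gamma_spec (x + 1) ltac:(lra)) as [Gx1 _].
  destruct (Gamma_spec (x + s) ltac:(lra)) as [Gxs _].
  set (g := fun t =>
    Rpower x s * ((1 - s) * gamma_integrand x t + s / x * gamma_integrand (x + 1) t)).
  assert (Gg : is_RInt_gen g (at_right 0) (Rbar_locally p_infty)
                 (Rpower x s * ((1 - s) * Gamma x + s / x * Gamma (x + 1))))
    by exact (is_RInt_gen_scal _ _ _ (is_RInt_gen_plus _ _ _ _
                (is_RInt_gen_scal _ _ _ Gx) (is_RInt_gen_scal _ _ _ Gx1))).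
  replace (Rpower x s * Gamma x) with (Rpower x s * ((1 - s) * Gamma x + s / x * Gamma (x + 1)))
    by (rewrite Gamma_succ by exact Hx; field; lra).
  apply (is_RInt_gen_0_infty_le (gamma_integrand (x + s)) g); [|exact Gxs | exact Gg].
  intros t Ht. split; [left; apply gamma_integrand_pos|].
  assert (Es : gamma_integrand (x + s) t = Rpower x s * Rpower (t / x) s * gamma_integrand x t).
  { unfold gamma_integrand. replace (x + s - 1) with (s + (x - 1)) by ring.
    rewrite Rpower_plus, Rmult_assoc, Rpower_mult_distr by (try apply Rdiv_lt_0_compat; lra).
    replace (x * (t / x)) with t by (field; lra). ring. }
  assert (E1 : gamma_integrand (x + 1) t = t * gamma_integrand x t).
  { unfold gamma_integrand. replace (x + 1 - 1) with (1 + (x - 1)) by ring.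
    rewrite Rpower_plus, Rpower_1 by exact Ht. ring. }
  pose proof (Rpower_le_affine (t / x) s ltac:(apply Rdiv_lt_0_compat; lra) Hs).
  pose proof (Rpower_pos x s). pose proof (gamma_integrand_pos x t).
  unfold g. rewrite Es, E1.
  replace (Rpower x s * ((1 - s) * gamma_integrand x t + s / x * (t * gamma_integrand x t)))
    with (Rpower x s * (1 - s + s * (t / x)) * gamma_integrand x t) by (field; lra).
  apply Rmult_le_compat_r; [lra|]. apply Rmult_le_compat_l; lra.
Qed.

Lemma Gamma_ratio_bound (x p : R) : 0 < x -> 0 <= p <= 1 ->
  Rabs (Gamma (x + 1 - p) / Gamma x - Rpower x (1 - p)) <= / Rpower x p.
Proof.
  intros Hx Hp.
  set (P := Rpower x p). set (r := Gamma (x + 1 - p) / Gamma x).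
  assert (HP : 0 < P) by apply Rpower_pos.
  assert (HGx : 0 < Gamma x) by (apply Gamma_pos, Hx).
  assert (Hpow : Rpower x (1 - p) = x / P).
  { unfold Rminus. rewrite Rpower_plus, Rpower_1, Rpower_Ropp by exact Hx. reflexivity. }
  assert (Hup : r * P <= x).
  { pose proof (Gamma_add_le x (1 - p) Hx ltac:(lra)) as H.
    replace (x + (1 - p)) with (x + 1 - p) in H by ring. rewrite Hpow in H.
    unfold r. apply (Rmult_le_reg_r (Gamma x / P)); [apply Rdiv_lt_0_compat; lra|].
    replace (Gamma (x + 1 - p) / Gamma x * P * (Gamma x / P)) with (Gamma (x + 1 - p))
      by (field; lra).
    replace (x * (Gamma x / P)) with (x / P * Gamma x) by (field; lra). exact H. }
  assert (Hlow : x * x <= r * P * (x + 1 - p)).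
  { set (y := (x + 1 - p) / x).
    assert (Hy : 1 <= y) by (apply (Rle_div_r 1 (x + 1 - p) x); lra).
    assert (Hyp : Rpower y p <= y).
    { rewrite <- (Rpower_1 y) at 2 by lra. apply Rle_Rpower; lra. }
    pose proof (Gamma_add_le (x + 1 - p) p ltac:(lra) Hp) as H.
    replace (x + 1 - p + p) with (x + 1) in H by ring.
    rewrite Gamma_succ in H by exact Hx.
    replace (x + 1 - p) with (x * y) in H at 1 by (unfold y; field; lra).
    rewrite <- Rpower_mult_distr in H by lra. fold P in H.
    unfold r. apply (Rmult_le_reg_r (Gamma x / x)); [apply Rdiv_lt_0_compat; lra|].
    replace (x * x * (Gamma x / x)) with (x * Gamma x) by (field; lra).
    replace (Gamma (x + 1 - p) / Gamma x * P * (x + 1 - p) * (Gamma x / x))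
      with (P * y * Gamma (x + 1 - p)) by (unfold y; field; lra).
    pose proof (Gamma_pos (x + 1 - p) ltac:(lra)).
    apply Rle_trans with (P * Rpower y p * Gamma (x + 1 - p)); [exact H|].
    apply Rmult_le_compat_r; [lra|]. apply Rmult_le_compat_l; lra. }
  assert (Hgap : x - r * P <= 1) by nra.
  rewrite Hpow. replace (r - x / P) with (- ((x - r * P) / P)) by (field; lra).
  rewrite Rabs_Ropp, Rabs_pos_eq by (apply Rdiv_le_0_compat; lra).
  apply (Rmult_le_reg_r P); [exact HP|].
  replace ((x - r * P) / P * P) with (x - r * P) by (field; lra).
  rewrite Rinv_l; lra.
Qed.

Lemma EK1_Gamma (p : R) (n : nat) : p < 2 -> (1 <= n)%nat ->
  EK1 p n = Gamma (INR n + 1 - p) / (Gamma (2 - p) * Gamma (INR n)).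
Proof.
  intros Hp Hn. induction n as [|n IH]; [lia|].
  assert (HG2 : 0 < Gamma (2 - p)) by (apply Gamma_pos; lra).
  destruct (Nat.eq_dec n 0) as [->|Hn0].
  - rewrite EK1_1. change (INR 1) with 1. rewrite Gamma_1.
    replace (1 + 1 - p) with (2 - p) by ring. field. lra.
  - rewrite EK1_S, IH, S_INR by lia.
    assert (Hm : 1 <= INR n) by (apply (le_INR 1); lia).
    pose proof (Gamma_pos (INR n) ltac:(lra)).
    rewrite Gamma_succ by lra. replace (INR n + 1 + 1 - p) with (INR n + 1 - p + 1) by ring.
    rewrite Gamma_succ by lra. field. lra.
Qed.

Theorem corollary4p1 (p : R) (hp : 0 < p < 1) :
  (forall n : nat, (1 <= n)%nat ->
     EK1 p n = Gamma (INR n + 1 - p) / (Gamma (2 - p) * Gamma (INR n))) /\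
  (exists (C : R) (N : nat), forall n : nat, (N <= n)%nat ->
     Rabs (EK1 p n - Rpower (INR n) (1 - p) / Gamma (2 - p)) <= C / Rpower (INR n) p).
Proof.
  assert (HG2 : 0 < Gamma (2 - p)) by (apply Gamma_pos; lra).
  split; [intros n Hn; apply EK1_Gamma; [lra | exact Hn]|].
  exists (/ Gamma (2 - p)), 1%nat. intros n Hn.
  rewrite EK1_Gamma by (lra || exact Hn).
  assert (Hx : 0 < INR n) by (apply lt_0_INR; lia).
  set (x := INR n) in *.
  pose proof (Gamma_pos x Hx).
  replace (Gamma (x + 1 - p) / (Gamma (2 - p) * Gamma x) - Rpower x (1 - p) / Gamma (2 - p))
    with (/ Gamma (2 - p) * (Gamma (x + 1 - p) / Gamma x - Rpower x (1 - p))) by (field; lra).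
  rewrite Rabs_mult, Rabs_pos_eq by (left; apply Rinv_0_lt_compat, HG2).
  apply Rmult_le_compat_l; [left; apply Rinv_0_lt_compat, HG2|].
  apply Gamma_ratio_bound; lra.
Qed.
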